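(* Let $\{S;\tilde w_1,\dots,\tilde w_N;p_1,\dots,p_N\}$ be a DIFS, and suppose that for some index $i$ the minimal absorbing set $\mathcal M[\tilde w_i,S]$ exists. Let $\mathcal A_k$ be a recurrent communication class of the associated Markov chain. If there is $\tilde x\in S$ with $\tilde x\in\mathcal A_k$ and $\tilde x\in\mathcal B[\mathcal M_j[\tilde w_i,S]]$ for some component $\mathcal M_j[\tilde w_i,S]$ of $\mathcal M[\tilde w_i,S]$, then $\mathcal M_j[\tilde w_i,S]\subset\mathcal A_k$.
   Context: $\mathcal D^n(\delta)=\{\delta m:m\in\mathbb Z^n\}$ for fixed $\delta>0$; $\mathbb N=\{1,2,\dots\}$. A DIFS $\{S;\tilde w_1,\dots,\tilde w_N;p_1,\dots,p_N\}$ consists of $S\subset\mathcal D^n(\delta)$, maps $\tilde w_i:S\to S$, and functions $p_i:S\to(0,1]$ with $\sum_ip_i(\tilde x)=1$ for every $\tilde x\in S$; its associated Markov chain on $S$ has transition probabilities $P(\tilde x,\tilde y)=\sum_ip_i(\tilde x)\mathbf 1_{\{\tilde y\}}(\tilde w_i(\tilde x))$. Accessibility: $P^k(\tilde x,\tilde y)>0$ for some $k\ge1$; a communication class is a maximal nonempty set of mutually accessible states; a state is recurrent if the chain started there returns to it in finitely many steps a.s.; a recurrent communication class is a communication class of recurrent states. Absorbing sets: for a map $\tilde w$ and nonempty $C$ with $\tilde w(C)\subset C$, a set $\Lambda\subset C$ is absorbing for $\tilde w$ in $C$ if for each $\tilde x\in C$ there is $N$ with $\tilde w^{\circ i}(\tilde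 x)\in\Lambda$ for all $i\ge N$. If the intersection of all absorbing sets for $\tilde w$ in $C$ is itself absorbing in $C$, it is the minimal absorbing set $\mathcal M[\tilde w,C]$ (and it is said to exist). Its components are the equivalence classes of the relation $\tilde x\sim\tilde y\iff\tilde w^{\circ j}(\tilde x)=\tilde w^{\circ l}(\tilde y)$ for some $j,l\in\mathbb N$; the basin of a component $\mathcal M_j$ is $\mathcal B[\mathcal M_j]=\{\tilde x\in C:\exists i\in\mathbb N,\ \tilde w^{\circ i}(\tilde x)\in\mathcal M_j\}$. *)

From HB Require Import structures.
From mathcomp Require Import all_boot all_order all_algebra.
From mathcomp Require Import all_classical all_reals all_analysis.
Set Implicit Arguments. Unset Strict Implicit. Unset Printing Implicit Defensive.
Import Order.TTheory GRing.Theory Num.Theory numFieldNormedType.Exports.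
Local Open Scope classical_set_scope.
Local Open Scope ring_scope.

Section DIFS.
Variables (R : realType) (n N : nat).
Notation pt := 'rV[R]_n.

Definition lattice (delta : R) : set pt :=
  [set x | exists m : 'rV[int]_n, x = delta *: map_mx (fun z : int => z%:~R) m].

Definition is_DIFS (delta : R) (S : set pt) (w : 'I_N -> pt -> pt)
    (p : 'I_N -> pt -> R) : Prop :=
  [/\ 0 < delta, S `<=` lattice delta,
      (forall i x, S x -> S (w i x)),
      (forall i x, S x -> 0 < p i x <= 1) &
      (forall x, S x -> \sum_(i < N) p i x = 1)].

Variables (w : 'I_N -> pt -> pt) (p : 'I_N -> pt -> R).

Fixpoint path_end (x : pt) (s : seq 'I_N) : pt :=
  if s is i :: s' then path_end (w i x) s' else x.

Fixpoint path_weight (x : pt) (s : seq 'I_N) : R :=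
  if s is i :: s' then p i x * path_weight (w i x) s' else 1.

Fixpoint path_states (x : pt) (s : seq 'I_N) : seq pt :=
  if s is i :: s' then w i x :: path_states (w i x) s' else [::].

Definition Pk (k : nat) (x y : pt) : R :=
  \sum_(s : k.-tuple 'I_N | path_end x s == y) path_weight x s.

Definition accessible (x y : pt) : Prop := exists k, (1 <= k)%N /\ 0 < Pk k x y.

(* Probability that the chain started at x first returns to x at step k. *)
Definition first_return (k : nat) (x : pt) : R :=
  \sum_(s : k.-tuple 'I_N |
          (path_end x s == x) && (x \notin take k.-1 (path_states x s)))
     path_weight x s.

(* x is recurrent: P_x(return in finitely many steps) = 1, i.e.
   lim_m P_x(return within m steps) = 1. *)
Definition recurrent (x : pt) : Prop :=
  (fun m : nat => \sum_(1 <= k < m.+1) first_return k x) @ \oo --> (1 : R).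

Definition mutually_accessible (A : set pt) : Prop :=
  forall x y, A x -> A y -> accessible x y /\ accessible y x.

Definition comm_class (S : set pt) (A : set pt) : Prop :=
  [/\ A !=set0, A `<=` S, mutually_accessible A &
      forall B, A `<=` B -> B `<=` S -> mutually_accessible B -> B = A].

Definition recurrent_comm_class (S : set pt) (A : set pt) : Prop :=
  comm_class S A /\ (forall x, A x -> recurrent x).

End DIFS.

Section Absorbing.
Variables (T : Type) (f : T -> T).

Definition absorbing (C L : set T) : Prop :=
  L `<=` C /\
  forall x, C x -> exists K : nat, forall i, (K <= i)%N -> L (iter i f x).

Definition minimal_absorbing_set (C M : set T) : Prop :=
  f @` C `<=` C /\ C !=set0 /\
  M = \bigcap_(L in [set L | absorbing C L]) L /\ absorbing C M.

Definition sim_rel (x y : T) : Prop :=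
  exists j l : nat, [/\ (1 <= j)%N, (1 <= l)%N & iter j f x = iter l f y].

Definition component (M Mj : set T) : Prop :=
  exists y, M y /\ Mj = [set z | M z /\ sim_rel y z].

Definition basin (C Mj : set T) : set T :=
  [set x | C x /\ exists i : nat, (1 <= i)%N /\ Mj (iter i f x)].

End Absorbing.

From HB Require Import structures.
From mathcomp Require Import all_boot all_order all_algebra.
From mathcomp Require Import all_classical all_reals all_analysis.
From mathcomp Require Import lra.
Import Order.TTheory GRing.Theory Num.Theory.
Set Implicit Arguments. Unset Strict Implicit. Unset Printing Implicit Defensive.
Local Open Scope classical_set_scope.
Local Open Scope ring_scope.

(* Every point of the minimal absorbing set of [w_i] is periodic, so every
   point [y] of the component [M_j] lies on the [w_i]-orbit of [x] and is
   accessible from [x]. A recurrent state [x] can only reach states leading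
   back to it: otherwise the chain escapes with positive probability into the
   closed set of states from which [x] is inaccessible, and the probability of
   returning to [x] stays bounded away from 1. Hence [x] and [y] communicate,
   and the maximality of the class [A] puts [y] in [A]. *)

Lemma big_tuple_cons (V : Type) (idx : V) (op : Monoid.com_law idx)
    (T : finType) (k : nat) (F : k.+1.-tuple T -> V) :
  \big[op/idx]_(t : k.+1.-tuple T) F t =
  \big[op/idx]_(j : T) \big[op/idx]_(s : k.-tuple T) F [tuple of j :: s].
Proof.
rewrite pair_big (reindex (fun js : T * k.-tuple T => [tuple of js.1 :: js.2])) //=.
exists (fun t : k.+1.-tuple T => (thead t, [tuple of behead t])).
  by move=> [j s] _; congr pair; apply: val_inj.
by move=> t _; rewrite [RHS]tuple_eta.
Qed.

Section Iterates.
Variables (T : Type) (f : T -> T).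

Lemma iter_closed (C : set T) :
  (forall z, C z -> C (f z)) -> forall k z, C z -> C (iter k f z).
Proof. by move=> Cf; elim=> [|k IH] z Cz //=; apply/Cf/IH. Qed.

Lemma iter_periodic (y : T) (k q : nat) : iter k f y = y -> iter (q * k) f y = y.
Proof. by move=> yk; elim: q => [|q IH] //; rewrite mulSn iterD IH. Qed.

(* The extra [k * b - b] steps complete the [b] steps to a multiple of the period. *)
Lemma iter_meet_periodic (y z : T) (k a b : nat) :
  (0 < k)%N -> iter k f y = y -> iter a f z = iter b f y ->
  iter (k * b - b + a) f z = y.
Proof.
move=> k_gt0 yk ab; rewrite iterD ab -iterD subnK ?leq_pmull //.
by rewrite mulnC iter_periodic.
Qed.

(* Otherwise [C] minus [y] would be absorbing. *)
Lemma minimal_absorbing_periodic (C M : set T) (y : T) :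
  minimal_absorbing_set f C M -> M y -> exists2 k, (0 < k)%N & iter k f y = y.
Proof.
case=> fC [_ [-> _]] My; apply: contrapT => aperiodic.
have Cf z : C z -> C (f z) by move=> Cz; apply: fC; exists z.
suff /My[] : absorbing f C [set z | C z /\ z <> y] by [].
split=> [z []//|z Cz].
have [[i0 zy]|never_y] := pselect (exists i0, iter i0 f z = y); last first.
  exists 0%N => i _; split; first exact: iter_closed.
  by move=> zy; apply: never_y; exists i.
exists i0.+1 => i lt_i0i; split; first exact: iter_closed.
rewrite -(subnK (ltnW lt_i0i)) iterD zy => yy; apply: aperiodic.
by exists (i - i0)%N; rewrite ?subn_gt0.
Qed.

Lemma basin_component_iter (C M Mj : set T) (x y : T) :
  minimal_absorbing_set f C M -> component f M Mj -> basin f C Mj x -> Mj y ->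
  exists2 c, (0 < c)%N & iter c f x = y.
Proof.
move=> MC [y0 [_ ->]] [_ [m [m_gt0 [Mz [j1 [l1 [_ _ e1]]]]]]] [My [j2 [l2 [_ _ e2]]]].
have [k k_gt0 yk] := minimal_absorbing_periodic MC My.
have meet : iter (j2 + l1) f (iter m f x) = iter (j1 + l2) f y.
  by rewrite iterD -e1 -iterD addnC iterD e2 -iterD.
exists (k * (j1 + l2) - (j1 + l2) + (j2 + l1) + m)%N.
  by rewrite addn_gt0 m_gt0 orbT.
by rewrite iterD; apply: iter_meet_periodic.
Qed.

End Iterates.

Section Chain.
Variables (R : realType) (n N : nat) (S : set 'rV[R]_n).
Variables (w : 'I_N -> 'rV[R]_n -> 'rV[R]_n) (p : 'I_N -> 'rV[R]_n -> R).
Hypothesis S_w : forall j z, S z -> S (w j z).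
Hypothesis p_range : forall j z, S z -> 0 < p j z <= 1.
Hypothesis sum_p : forall z, S z -> \sum_(j < N) p j z = 1.

Local Notation pt := 'rV[R]_n.
Local Notation accessible := (accessible w p).

Lemma path_weight_gt0 (z : pt) (t : seq 'I_N) : S z -> 0 < path_weight w p z t.
Proof.
elim: t z => [|j t IH] z Sz /=; first exact: ltr01.
have /andP[p_gt0 _] := p_range j Sz.
by rewrite mulr_gt0 // IH //; apply: S_w.
Qed.

Lemma path_weight_le1 (z : pt) (t : seq 'I_N) : S z -> path_weight w p z t <= 1.
Proof.
elim: t z => [|j t IH] z Sz //=.
have /andP[p_gt0 p_le1] := p_range j Sz.
have Swz := S_w j Sz.
by rewrite mulr_ile1 ?IH // ltW // path_weight_gt0.
Qed.

Lemma path_end_cat (z : pt) (s1 s2 : seq 'I_N) :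
  path_end w z (s1 ++ s2) = path_end w (path_end w z s1) s2.
Proof. by elim: s1 z => /=. Qed.

Lemma path_end_nseq (j : 'I_N) (k : nat) (z : pt) :
  path_end w z (nseq k j) = iter k (w j) z.
Proof. by elim: k z => [|k IH] z //; rewrite iterSr -IH. Qed.

Lemma accessible_path (z : pt) (s : seq 'I_N) :
  S z -> (0 < size s)%N -> accessible z (path_end w z s).
Proof.
move=> Sz s_gt0; exists (size s); split=> //.
rewrite /Pk (bigD1 (in_tuple s)) //= ltr_pwDl ?path_weight_gt0 //.
by apply: sumr_ge0 => t _; rewrite ltW ?path_weight_gt0.
Qed.

Lemma accessible_pathP (u v : pt) :
  accessible u v -> exists2 s, (0 < size s)%N & path_end w u s = v.
Proof.
case=> k [k_gt0]; apply: contraPP => /forall2NP no_path.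
rewrite /Pk big1 ?ltxx // => t /eqP uv.
by case: (no_path t) => [|/(_ uv)//]; rewrite size_tuple.
Qed.

Lemma accessible_trans (u v y : pt) :
  S u -> accessible u v -> accessible v y -> accessible u y.
Proof.
move=> Su /accessible_pathP[s1 s1_gt0 <-] /accessible_pathP[s2 _ <-].
by rewrite -path_end_cat; apply: accessible_path; rewrite // size_cat addn_gt0 s1_gt0.
Qed.

(* [first_hit x k x] is [first_return w p k x]; the arbitrary starting point [z]
   is needed for the first-step recursion [hit_withinS]. *)
Definition first_hit (x : pt) (k : nat) (z : pt) : R :=
  \sum_(s : k.-tuple 'I_N |
          (path_end w z s == x) && (x \notin take k.-1 (path_states w z s)))
     path_weight w p z s.

Definition hit_within (x : pt) (m : nat) (z : pt) : R :=
  \sum_(1 <= k < m.+1) first_hit x k z.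

Lemma first_hit1 (x z : pt) : first_hit x 1 z = \sum_(j < N) p j z * (w j z == x)%:R.
Proof.
rewrite /first_hit big_mkcond big_tuple_cons; apply: eq_bigr => j _.
rewrite (big_pred1 [tuple]) => [|s]; last by apply/esym/eqP/tuple0.
by rewrite /= mulr1; case: eqP; rewrite ?mulr1 ?mulr0.
Qed.

Lemma first_hitS (x : pt) (k : nat) (z : pt) : (0 < k)%N ->
  first_hit x k.+1 z =
  \sum_(j < N) p j z * (if w j z == x then 0 else first_hit x k (w j z)).
Proof.
case: k => // k _; rewrite /first_hit big_mkcond big_tuple_cons.
apply: eq_bigr => j _ /=; case: eqP => [<-|wzx].
  by rewrite mulr0 big1 // => s _; rewrite in_cons eqxx andbF.
rewrite [in RHS]big_mkcond mulr_sumr; apply: eq_bigr => s _.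
rewrite in_cons [x == w j z]eq_sym (introF eqP wzx) /=.
by case: ifP; rewrite ?mulr0.
Qed.

Lemma hit_withinS (x : pt) (m : nat) (z : pt) :
  hit_within x m.+1 z =
  \sum_(j < N) p j z * (if w j z == x then 1 else hit_within x m (w j z)).
Proof.
rewrite /hit_within big_nat_recl // first_hit1.
rewrite (eq_big_nat _ _ (F2 := fun k => \sum_(j < N) p j z *
    (if w j z == x then 0 else first_hit x k (w j z)))); last first.
  by move=> k /andP[k_gt0 _]; rewrite first_hitS.
rewrite exchange_big -big_split /=; apply: eq_bigr => j _.
rewrite -mulr_sumr -mulrDr; case: eqP => _; last by rewrite add0r.
by rewrite big1 ?addr0.
Qed.

Lemma hit_within_le1 (x : pt) (m : nat) (z : pt) : S z -> hit_within x m z <= 1.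
Proof.
elim: m z => [|m IH] z Sz; first by rewrite /hit_within big_geq.
rewrite hit_withinS -[leRHS](sum_p Sz); apply: ler_sum => j _.
have /andP[p_gt0 _] := p_range j Sz.
rewrite -[leRHS]mulr1 ler_wpM2l ?(ltW p_gt0) //; case: eqP => // _.
by apply: IH; apply: S_w.
Qed.

Section Escape.
Variables (x : pt) (B : set pt).
Hypotheses (B_w : forall j v, B v -> B (w j v)) (B_x : ~ B x).

Lemma hit_within_closed0 (m : nat) (z : pt) : B z -> hit_within x m z = 0.
Proof.
elim: m z => [|m IH] z Bz; first by rewrite /hit_within big_geq.
rewrite hit_withinS big1 // => j _; have Bwz := B_w j Bz.
by case: eqP => [wzx|_]; [rewrite wzx in Bwz | rewrite IH ?mulr0].
Qed.

Lemma hit_within_escape (t : seq 'I_N) (m : nat) (z : pt) :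
  S z -> B (path_end w z t) -> x \notin path_states w z t ->
  hit_within x m z <= 1 - path_weight w p z t.
Proof.
elim: t m z => [|j t IH] m z Sz /= Bt; first by rewrite hit_within_closed0 ?subrr.
rewrite inE negb_or eq_sym => /andP[wzx x_notin_t].
case: m => [|m].
  by rewrite /hit_within big_geq // subr_ge0; exact: (path_weight_le1 (j :: t) Sz).
set c := path_weight w p (w j z) t.
rewrite hit_withinS.
apply: (@le_trans _ _ (\sum_(k < N) p k z * (if k == j then 1 - c else 1))).
  apply: ler_sum => k _; have /andP[p_gt0 _] := p_range k Sz.
  rewrite ler_pM2l //; case: (eqVneq k j) => [->|_].
    by rewrite (negbTE wzx); apply: IH => //; apply: S_w.
  by case: eqP => // _; apply: hit_within_le1; apply: S_w.
rewrite (bigD1 j) //= eqxx (eq_bigr (fun k => p k z)) => [|k /negbTE->].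
  by have := sum_p Sz; rewrite (bigD1 j) //=; lra.
exact: mulr1.
Qed.

End Escape.

Lemma path_end_closed (z : pt) (s : seq 'I_N) : S z -> S (path_end w z s).
Proof. by elim: s z => //= j s IH z Sz; apply/IH/S_w. Qed.

(* Cut the path after its last visit to [x]. *)
Lemma escape_path (x : pt) (B : set pt) (s : seq 'I_N) (z : pt) :
  B (path_end w z s) ->
  (exists2 t, B (path_end w z t) & x \notin path_states w z t) \/
  (exists2 t, B (path_end w x t) & x \notin path_states w x t).
Proof.
elim: s z => [|j s IH] z /= Bs; first by left; exists [::].
case: (IH _ Bs) => [[t Bt x_notin_t]|]; last by right.
case: (eqVneq (w j z) x) => [wzx|wzx].
  by rewrite wzx in Bt x_notin_t; right; exists t.
by left; exists (j :: t) => //=; rewrite in_cons eq_sym negb_or wzx.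
Qed.

Lemma recurrent_hit_within_gt (x : pt) (c : R) :
  recurrent w p x -> c < 1 -> exists m, c < hit_within x m x.
Proof.
move=> x_rec c_lt1; have [m c_lt] := filter_ex (cvgr_gt _ x_rec _ c_lt1).
by exists m.
Qed.

Lemma recurrent_accessible_sym (x y : pt) :
  S x -> recurrent w p x -> accessible x y -> accessible y x.
Proof.
move=> Sx x_rec xy; apply: contrapT => not_yx.
pose B := [set v | [/\ S v, v <> x & ~ accessible v x]].
have B_w j v : B v -> B (w j v).
  case=> Sv _ not_vx; split; first exact: S_w.
    move=> wvx; apply: not_vx; rewrite -wvx -[w j v]/(path_end w v [:: j]).
    exact: accessible_path.
  move=> /accessible_pathP[s _ wvs]; apply: not_vx.
  by rewrite -wvs -[path_end _ _ s]/(path_end w v (j :: s)); apply: accessible_path.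
have [s _ xs] := accessible_pathP xy.
have By : B (path_end w x s).
  split; [exact: path_end_closed | rewrite xs => yx | by rewrite xs].
  by apply: not_yx; rewrite yx; rewrite yx in xy.
have [t Bt x_notin_t] : exists2 t, B (path_end w x t) & x \notin path_states w x t.
  by case: (escape_path x By).
have [|m] := @recurrent_hit_within_gt x (1 - path_weight w p x t) x_rec.
  by rewrite ltrBlDr ltrDl path_weight_gt0.
by apply/negP; rewrite -leNgt (hit_within_escape B_w) // => -[].
Qed.

Lemma comm_class_accessible (A : set pt) (x y : pt) :
  comm_class w p S A -> A x -> S y -> accessible x y -> accessible y x -> A y.
Proof.
case=> _ AS A_mut A_max Ax Sy xy yx.
have acc_y a : A a -> accessible a y /\ accessible y a.
  move=> Aa; have [ax xa] := A_mut a x Aa Ax.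
  by split; [apply: accessible_trans xy; [apply: AS | ] | apply: accessible_trans yx xa].
suff <- : A `|` [set y] = A by right.
apply: A_max => [a Aa|a [/AS|->]//|a b [Aa|->] [Ab|->]]; first by left.
- exact: A_mut.
- exact: acc_y.
- by have [] := acc_y b Ab.
- by split; apply: accessible_trans yx xy.
Qed.

End Chain.

Theorem lemma5 (R : realType) (n N : nat) (delta : R) (S : set 'rV[R]_n)
    (w : 'I_N -> 'rV[R]_n -> 'rV[R]_n) (p : 'I_N -> 'rV[R]_n -> R)
    (HD : is_DIFS delta S w p)
    (i : 'I_N) (M : set 'rV[R]_n) (HM : minimal_absorbing_set (w i) S M)
    (A : set 'rV[R]_n) (HA : recurrent_comm_class w p S A)
    (Mj : set 'rV[R]_n) (HMj : component (w i) M Mj)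
    (x : 'rV[R]_n) (xS : S x) (xA : A x) (xB : basin (w i) S Mj x) :
  Mj `<=` A.
Proof.
case: HD => _ _ S_w p_range sum_p; case: HA => A_class A_rec.
move=> y Mjy; have [c c_gt0 xy] := basin_component_iter HM HMj xB Mjy.
have Sy : S y by rewrite -xy; apply: iter_closed xS; apply: S_w.
have acc_xy : accessible w p x y.
  rewrite -xy -path_end_nseq.
  by apply: (accessible_path S_w p_range); rewrite ?size_nseq.
apply: (comm_class_accessible S_w p_range A_class xA Sy acc_xy).
exact: (recurrent_accessible_sym S_w p_range sum_p xS (A_rec x xA) acc_xy).
Qed.
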